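(* Let $\mathcal C$ be a concept hierarchy, $r_1,r_2,\epsilon\in[0,1]$ with $r_1\le r_2(1-\epsilon)$, $m$ a positive integer, and let $\mathcal A_1$ and $\mathcal H$ be the networks defined below (with $\mathcal H$ having a fixed failed set $F$ satisfying the stated constraint). Then $\mathcal H$ $implements_1$ $\mathcal A_1$: for every $B\subseteq C_0$, in the executions of $\mathcal A_1$ and $\mathcal H$ on input $B$, for every concept $c$, if $rep(c)$ fires at time $level(c)$ in $\mathcal A_1$, then at least $m(1-\epsilon)$ of the neurons in $reps(c)$ fire at time $level(c)$ in $\mathcal H$.
   Context: Concept hierarchies: fix positive integers $\ell_{max},n,k$. A universal set $D$ of concepts is partitioned into disjoint sets $D_0,\dots,D_{\ell_{max}}$ with $|D_0|=n$; $level(c)=\ell$ for $c\in D_\ell$. A concept hierarchy $\mathcal C$ consists of $C\subseteq D$, with $C_\ell=C\cap D_\ell$, and for each $c\in C_\ell$ with $1\le\ell\le\ell_{max}$ a set $children(c)\subseteq C_{\ell-1}$, such that $|C_{\ell_{max}}|=k$, $|children(c)|=k$ for all such $c$, and $children(c)\cap children(c')=\emptyset$ for distinct $c,c'\in C_\ell$. Common network dynamics: neurons partitioned into layers $N_0,\dots,N_{\ell_{max}}$; threshold $\tau$; weights $w(u,v)\in\{0,1\}$ for $u\in N_{\ell-1}$, $v\in N_\ell$. Failed neurons never fire. A non-failed neuron $v\in N_\ell$, $\ell\ge1$, does not fire at time 0 and fires at time $t\ge1$ iff $\sum_{u\in N_{\ell-1}}w(u,v)x_u(t-1)\ge\tau$,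 where $x_u(s)\in\{0,1\}$ indicates whether $u$ fires at time $s$. $\mathcal A_1$: no failures; each $c\in D_0$ has $rep(c)\in N_0$, each $c\in C$ with $level(c)\ge1$ has $rep(c)\in N_{level(c)}$, all distinct; $w(u,v)=1$ iff $v=rep(c)$, $u=rep(c')$ for a child $c'$ of $c$, else $0$; $\tau=r_2k$. Input $B\subseteq C_0$: the layer-0 neurons $rep(b)$, $b\in B$, fire at time 0, no other layer-0 neuron fires at time 0, and no layer-0 neuron fires at any other time. $\mathcal H$: each $c\in D_0$ has a set $reps(c)$ of $m$ neurons in $N_0$, each $c\in C$ with $level(c)\ge1$ a set $reps(c)$ of $m$ neurons in $N_{level(c)}$, all pairwise disjoint; $w(u,v)=1$ iff $v\in reps(c)$ and $u\in reps(c')$ for a child $c'$ of $c$, else $0$; $\tau=r_2km(1-\epsilon)$. A fixed set $F$ of neurons is failed, such that for every concept $c$ at least $m(1-\epsilon)$ neurons of $reps(c)$ are not in $F$. Input $B\subseteq C_0$: a layer-0 neuron fires at time 0 iff it is in $\bigcup_{b\in B}reps(b)\setminus F$, and no layer-0 neuron fires at any other time. *)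

From mathcomp Require Import all_boot all_order all_algebra.
Set Implicit Arguments. Unset Strict Implicit. Unset Printing Implicit Defensive.
Import Order.TTheory GRing.Theory Num.Theory.
Local Open Scope ring_scope.

Definition universe_ok (D : finType) (lvl : D -> nat) (lmax n : nat) : Prop :=
  (forall c, (lvl c <= lmax)%N) /\ #|[set c | lvl c == 0%N]| = n.

Definition is_hierarchy (D : finType) (lvl : D -> nat) (lmax k : nat)
    (C : {set D}) (children : D -> {set D}) : Prop :=
  [/\ #|[set c in C | lvl c == lmax]| = k,
      (forall c, c \in C -> (1 <= lvl c)%N ->
          children c \subset [set c' in C | lvl c' == (lvl c).-1]),
      (forall c, c \in C -> (1 <= lvl c)%N -> #|children c| = k) &
      (forall c c', c \in C -> c' \in C -> (1 <= lvl c)%N ->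
          lvl c = lvl c' -> c != c' -> [disjoint children c & children c'])].

Definition has_rep (D : finType) (lvl : D -> nat) (C : {set D}) (c : D) : bool :=
  (lvl c == 0%N) || ((c \in C) && (1 <= lvl c)%N).

(* Neurons N with layer function; 0/1 weights w u v (only used for
   u in layer (layer v - 1), v in layer >= 1); real threshold tau;
   failed neurons; input = layer-0 neurons firing at time 0. *)
Fixpoint fires (R : realFieldType) (N : finType) (layer : N -> nat)
    (w : N -> N -> bool) (tau : R) (failed : pred N) (input : pred N)
    (t : nat) : N -> bool :=
  match t with
  | 0 => fun v => ~~ failed v && (layer v == 0%N) && input v
  | t'.+1 => fun v =>
      [&& ~~ failed v, (1 <= layer v)%N &
        tau <= (#|[set u | (layer u == (layer v).-1) && w u v
                          && fires layer w tau failed input t' u]|)%:R]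
  end.

Definition wA1 (D : finType) (lvl : D -> nat) (C : {set D})
    (children : D -> {set D}) (N : finType) (rep : D -> N) (u v : N) : bool :=
  [exists c in C, [&& (1 <= lvl c)%N, v == rep c &
                     [exists c' in children c, u == rep c']]].

Definition firesA1 (R : realFieldType) (D : finType) (lvl : D -> nat)
    (C : {set D}) (children : D -> {set D}) (k : nat) (r2 : R)
    (N : finType) (layer : N -> nat) (rep : D -> N) (B : {set D}) :
    nat -> N -> bool :=
  fires layer (wA1 lvl C children rep) (r2 * k%:R) pred0
        (fun v => [exists b in B, v == rep b]).

Definition wH (D : finType) (lvl : D -> nat) (C : {set D})
    (children : D -> {set D}) (N : finType) (reps : D -> {set N}) (u v : N) :
    bool :=
  [exists c in C, [&& (1 <= lvl c)%N, v \in reps c &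
                     [exists c' in children c, u \in reps c']]].

Definition firesH (R : realFieldType) (D : finType) (lvl : D -> nat)
    (C : {set D}) (children : D -> {set D}) (k m : nat) (r2 eps : R)
    (N : finType) (layer : N -> nat) (reps : D -> {set N}) (F : {set N})
    (B : {set D}) : nat -> N -> bool :=
  fires layer (wH lvl C children reps) (r2 * k%:R * m%:R * (1 - eps))
        (fun v => v \in F) (fun v => [exists b in B, v \in reps b]).

From mathcomp Require Import all_boot all_order all_algebra.
Set Implicit Arguments. Unset Strict Implicit. Unset Printing Implicit Defensive.
Import Order.TTheory GRing.Theory Num.Theory.
Local Open Scope ring_scope.

(* By induction on the level one shows more than required: whenever rep c
   fires in A_1, every non-failed neuron of reps c fires in H.  At level l+1, rep c firing means that at
   least r2 k children c' of c have rep c' firing; by induction each of them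
   contributes at least m(1-eps) firing neurons of reps c', all of which are
   presynaptic to every neuron of reps c.  These sets are pairwise disjoint,
   so every non-failed neuron of reps c receives at least r2 k m (1-eps)
   firing inputs, which is exactly the threshold of H. *)

Lemma card_bigcup_disjoint (I T : finType) (S : {set I}) (G : I -> {set T}) :
  {in S &, forall i j, i != j -> [disjoint G i & G j]} ->
  #|\bigcup_(i in S) G i| = (\sum_(i in S) #|G i|)%N.
Proof.
move=> disjG; rewrite big_mkcond [RHS]big_mkcond -sum1_card.
rewrite partition_disjoint_bigcup => [|i j].
  by apply: eq_bigr => i _; case: ifP => _; rewrite sum1_card ?cards0.
move=> ij; case: ifP => iS; case: ifP => jS;
  by [apply: disjG | rewrite -setI_eq0 ?setI0 ?set0I].
Qed.

Section ImplementsA1.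

Variables (R : realFieldType) (k m : nat) (r2 eps : R).
Variables (D : finType) (lvl : D -> nat) (C : {set D}) (children : D -> {set D}).
Variables (NA : finType) (layerA : NA -> nat) (rep : D -> NA).
Variables (NH : finType) (layerH : NH -> nat) (reps : D -> {set NH}).
Variables (F : {set NH}) (B : {set D}).

Local Notation represented := (has_rep lvl C).
Local Notation firingA := (firesA1 lvl C children k r2 layerA rep B).
Local Notation firingH := (firesH lvl C children k m r2 eps layerH reps F B).

Hypothesis children_sub : forall c, c \in C -> (1 <= lvl c)%N ->
  children c \subset [set c' in C | lvl c' == (lvl c).-1].
Hypothesis rep_inj : {in represented &, injective rep}.
Hypothesis reps_layer :
  forall c v, represented c -> v \in reps c -> layerH v = lvl c.
Hypothesis reps_disjoint : forall c c', represented c -> represented c' ->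
  c != c' -> [disjoint reps c & reps c'].
Hypothesis reps_unfailed :
  forall c, represented c -> m%:R * (1 - eps) <= #|reps c :\: F|%:R.
Hypothesis input_level0 : B \subset [set c in C | lvl c == 0%N].
Hypothesis eps_le1 : eps <= 1.

Lemma represented_child c c' : c \in C -> (1 <= lvl c)%N ->
  c' \in children c -> [/\ c' \in C, lvl c' = (lvl c).-1 & represented c'].
Proof.
move=> cC lc /(subsetP (children_sub cC lc)); rewrite inE => /andP[c'C /eqP lc'].
by split=> //; rewrite /has_rep c'C /=; case: (lvl c').
Qed.

Lemma lvl_input b : b \in B -> lvl b = 0%N.
Proof. by move=> /(subsetP input_level0); rewrite inE => /andP[_ /eqP]. Qed.

Lemma represented_input b : b \in B -> represented b.
Proof. by move=> /lvl_input lb; rewrite /has_rep lb. Qed.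

Lemma firingA0_input c : represented c -> firingA 0 (rep c) -> c \in B.
Proof.
move=> hc /andP[_ /existsP[b /andP[bB /eqP eq_rep]]].
by rewrite (rep_inj hc (represented_input bB) eq_rep).
Qed.

Lemma firingH0_input b v : b \in B -> v \in reps b :\: F -> firingH 0 v.
Proof.
move=> bB /setDP[vb vF]; rewrite /firesH /= vF (reps_layer (represented_input bB) vb).
by rewrite lvl_input //=; apply/existsP; exists b; rewrite bB.
Qed.

Lemma firingA_children l c : represented c -> firingA l.+1 (rep c) ->
  r2 * k%:R <= #|[set c' in children c | firingA l (rep c')]|%:R.
Proof.
move=> hc /and3P[_ _ /le_trans]; apply; rewrite ler_nat.
apply: leq_trans (leq_imset_card rep _); apply: subset_leq_card.
apply/subsetP => u; rewrite inE => /andP[/andP[_ /existsP[c0 wu]]].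
case/and4P: wu => c0C lc0 /eqP eq_rep /existsP[c' /andP[c'c /eqP ->]] fc'.
have hc0 : represented c0 by rewrite /has_rep c0C lc0 orbT.
by rewrite (rep_inj hc hc0 eq_rep) imset_f // inE c'c.
Qed.

Lemma firingH_presynaptic l c (S : {set D}) v : c \in C -> (1 <= lvl c)%N ->
    S \subset children c -> v \in reps c ->
  (\sum_(c' in S) #|[set u in reps c' | firingH l u]| <=
   #|[set u | (layerH u == (layerH v).-1) &&
              wH lvl C children reps u v && firingH l u]|)%N.
Proof.
move=> cC lc Sc vc; have hc : represented c by rewrite /has_rep cC lc orbT.
have childS c' (c'S : c' \in S) := represented_child cC lc (subsetP Sc c' c'S).
rewrite -card_bigcup_disjoint => [|c1 c2 /childS[_ _ h1] /childS[_ _ h2] c12].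
  apply/subset_leq_card/subsetP => u /bigcupP[c' c'S /setIdP[uc' fu]].
  have [_ lc' hc'] := childS c' c'S.
  rewrite inE fu (reps_layer hc' uc') lc' (reps_layer hc vc) eqxx andbT /=.
  apply/existsP; exists c; rewrite cC lc vc; apply/existsP; exists c'.
  by rewrite (subsetP Sc) ?uc'.
by apply: disjointW (reps_disjoint h1 h2 c12); apply/subsetP => u /setIdP[].
Qed.

Lemma firingH_succ l c v : represented c -> lvl c = l.+1 ->
    (forall c', represented c' -> lvl c' = l -> firingA l (rep c') ->
       m%:R * (1 - eps) <= #|[set u in reps c' | firingH l u]|%:R) ->
  firingA l.+1 (rep c) -> v \in reps c :\: F -> firingH l.+1 v.
Proof.
move=> hc lc fire_children fc /setDP[vc vF].
have lc1 : (1 <= lvl c)%N by rewrite lc.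
have cC : c \in C by case/orP: hc => [/eqP|/andP[]//]; rewrite lc.
pose S := [set c' in children c | firingA l (rep c')].
have Sc : S \subset children c by apply/subsetP => c' /setIdP[].
have fireS c' : c' \in S ->
    m%:R * (1 - eps) <= #|[set u in reps c' | firingH l u]|%:R.
  case/setIdP=> /(represented_child cC lc1)[_ lc' hc'].
  by apply: fire_children hc' _; rewrite lc' lc.
have v_layer : (0 < layerH v)%N by rewrite (reps_layer hc vc) lc.
rewrite /firesH /= vF v_layer /=.
have := firingH_presynaptic l cC lc1 Sc vc.
rewrite -(ler_nat R) => /(le_trans _); apply.
rewrite natr_sum -mulrA; apply: le_trans (ler_sum _ fireS).
rewrite sumr_const -[leRHS]mulr_natl ler_wpM2r ?mulr_ge0 ?subr_ge0 //.
exact: firingA_children hc fc.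
Qed.

Lemma unfailed_reps_fire c : represented c -> firingA (lvl c) (rep c) ->
  reps c :\: F \subset [set v in reps c | firingH (lvl c) v].
Proof.
move=> hc; move lc: (lvl c) => l; elim: l c hc lc => [|l IHl] c hc lc fc;
  apply/subsetP => v vcF; have /setDP[vc _] := vcF; rewrite inE vc /=.
  exact: firingH0_input (firingA0_input hc fc) vcF.
apply: firingH_succ hc lc _ fc vcF => c' hc' lc' fc'.
apply: le_trans (reps_unfailed hc') _; rewrite ler_nat subset_leq_card //.
exact: IHl hc' lc' fc'.
Qed.

End ImplementsA1.

Theorem theorem7p1
  (R : realFieldType) (lmax n k m : nat)
  (D : finType) (lvl : D -> nat) (C : {set D}) (children : D -> {set D})
  (r1 r2 eps : R)
  (NA : finType) (layerA : NA -> nat) (rep : D -> NA)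
  (NH : finType) (layerH : NH -> nat) (reps : D -> {set NH}) (F : {set NH}) :
  (0 < lmax)%N -> (0 < n)%N -> (0 < k)%N -> (0 < m)%N ->
  universe_ok lvl lmax n ->
  is_hierarchy lvl lmax k C children ->
  0 <= r1 <= 1 -> 0 <= r2 <= 1 -> 0 <= eps <= 1 ->
  r1 <= r2 * (1 - eps) ->
  (* network A_1 *)
  (forall v, (layerA v <= lmax)%N) ->
  (forall c, has_rep lvl C c -> layerA (rep c) = lvl c) ->
  {in has_rep lvl C &, injective rep} ->
  (* network H *)
  (forall v, (layerH v <= lmax)%N) ->
  (forall c, has_rep lvl C c -> #|reps c| = m) ->
  (forall c v, has_rep lvl C c -> v \in reps c -> layerH v = lvl c) ->
  (forall c c', has_rep lvl C c -> has_rep lvl C c' -> c != c' ->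
     [disjoint reps c & reps c']) ->
  (forall c, has_rep lvl C c -> m%:R * (1 - eps) <= #|reps c :\: F|%:R) ->
  (* conclusion: H implements_1 A_1 *)
  forall B : {set D}, B \subset [set c in C | lvl c == 0%N] ->
  forall c, has_rep lvl C c ->
    firesA1 lvl C children k r2 layerA rep B (lvl c) (rep c) ->
    m%:R * (1 - eps) <=
      #|[set v in reps c |
          firesH lvl C children k m r2 eps layerH reps F B (lvl c) v]|%:R.
Proof.
move=> _ _ _ _ _ [_ children_sub _ _] _ _ /andP[_ eps_le1] _ _ _ rep_inj _ _
  reps_layer reps_disjoint reps_unfailed B input_level0 c hc fc.
apply: le_trans (reps_unfailed c hc) _; rewrite ler_nat subset_leq_card //.
exact: (unfailed_reps_fire children_sub rep_inj reps_layer reps_disjoint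
  reps_unfailed input_level0 eps_le1 hc fc).
Qed.
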